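(* Assume the setting and Assumption (A) in the context, and let $f:\mathcal{X}\to\mathbb{R}^{n_{\text{out}}}$ satisfy $A(x)f(x)\le b(x)$ and $C(x)f(x)=d(x)$ for all $x\in\mathcal{X}$. Write $f(x)=\begin{bmatrix} f_1(x)\\ f_2(x)\end{bmatrix}$ with $f_1(x)\in\mathbb{R}^{n_{\text{eq}}}$, $f_2(x)\in\mathbb{R}^{n_{\text{out}}-n_{\text{eq}}}$. Then for every $f_\theta:\mathcal{X}\to\mathbb{R}^{n_{\text{out}}-n_{\text{eq}}}$ and every $x\in\mathcal{X}$, $$\|f(x)-\mathcal{P}(f_\theta)(x)\|_2\le \big(1+\|\tilde A(x)^+\|_2\,\|\tilde A(x)\|_2\big)\sqrt{1+\|C_1(x)^{-1}C_2(x)\|_2^2}\;\|f_2(x)-f_\theta(x)\|_2,$$ where for matrices $\|\cdot\|_2$ denotes the operator norm induced by the Euclidean norm.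
   Context: Setting: $\mathcal{X}\subset\mathbb{R}^{n_{\text{in}}}$; integers $n_{\text{ineq}}\ge 0$, $0\le n_{\text{eq}}\le n_{\text{out}}$; maps $A:\mathcal{X}\to\mathbb{R}^{n_{\text{ineq}}\times n_{\text{out}}}$, $b:\mathcal{X}\to\mathbb{R}^{n_{\text{ineq}}}$, $C:\mathcal{X}\to\mathbb{R}^{n_{\text{eq}}\times n_{\text{out}}}$, $d:\mathcal{X}\to\mathbb{R}^{n_{\text{eq}}}$, describing the constraints $A(x)y\le b(x)$, $C(x)y=d(x)$ on $y\in\mathbb{R}^{n_{\text{out}}}$. Write $A(x)=[A_1(x)\;A_2(x)]$ and $C(x)=[C_1(x)\;C_2(x)]$, where $A_1,C_1$ consist of the first $n_{\text{eq}}$ columns and $A_2,C_2$ of the last $n_{\text{out}}-n_{\text{eq}}$ columns. (If $n_{\text{eq}}=0$, the equality constraints, $C_1$, $C_2$, $d$ and the first block below are absent.) Assumption (A): (i) for every $x\in\mathcal{X}$ there exists $y\in\mathbb{R}^{n_{\text{out}}}$ with $A(x)y\le b(x)$ and $C(x)y=d(x)$; (ii) $C_1(x)$ is invertible for all $x\in\mathcal{X}$; (iii) $\tilde A(x):=A_2(x)-A_1(x)C_1(x)^{-1}C_2(x)\in\mathbb{R}^{n_{\text{ineq}}\times(n_{\text{out}}-n_{\text{eq}})}$ has full row rank for all $x\in\mathcal{X}$. Define $\tilde b(x):=b(x)-A_1(x)C_1(x)^{-1}d(x)$. For a full-row-rank matrix $M$, $M^+:=M^\top(MM^\top)^{-1}$.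 $\mathsf{ReLU}(v)$ is the componentwise $\max(v,0)$. HardNet-Aff: for $f_\theta:\mathcal{X}\to\mathbb{R}^{n_{\text{out}}-n_{\text{eq}}}$, define $f_\theta^*(x):=f_\theta(x)-\tilde A(x)^+\,\mathsf{ReLU}\big(\tilde A(x)f_\theta(x)-\tilde b(x)\big)$ and $$\mathcal{P}(f_\theta)(x):=\begin{bmatrix} C_1(x)^{-1}\big(d(x)-C_2(x)f_\theta^*(x)\big)\\ f_\theta^*(x)\end{bmatrix}\in\mathbb{R}^{n_{\text{out}}}.$$ *)

From HB Require Import structures.
From mathcomp Require Import all_boot all_order all_algebra.
From mathcomp Require Import boolp classical_sets reals.
Set Implicit Arguments. Unset Strict Implicit. Unset Printing Implicit Defensive.
Import Order.TTheory GRing.Theory Num.Theory.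
Local Open Scope ring_scope.
Local Open Scope classical_set_scope.

Section HardNet.
Variable R : realType.

Definition norm2 (n : nat) (v : 'cV[R]_n) : R :=
  Num.sqrt (\sum_(i < n) v i 0 ^+ 2).

Definition opnorm2 (p q : nat) (M : 'M[R]_(p, q)) : R :=
  sup [set norm2 (M *m v) | v in [set v : 'cV[R]_q | norm2 v <= 1]].

Definition mxle (p q : nat) (u v : 'M[R]_(p, q)) : Prop :=
  forall i j, u i j <= v i j.

(* Moore–Penrose pseudo-inverse for full-row-rank matrices: M^T (M M^T)^-1. *)
Definition pinv (p q : nat) (M : 'M[R]_(p, q)) : 'M[R]_(q, p) :=
  M^T *m invmx (M *m M^T).

Definition relu (p q : nat) (M : 'M[R]_(p, q)) : 'M[R]_(p, q) :=
  map_mx (fun t => Num.max t 0) M.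

Definition Atil (k ne m : nat) (A : 'M[R]_(k, ne + m)) (C : 'M[R]_(ne, ne + m))
  : 'M[R]_(k, m) :=
  rsubmx A - lsubmx A *m invmx (lsubmx C) *m rsubmx C.

Definition btil (k ne m : nat) (A : 'M[R]_(k, ne + m)) (b : 'cV[R]_k)
  (C : 'M[R]_(ne, ne + m)) (d : 'cV[R]_ne) : 'cV[R]_k :=
  b - lsubmx A *m invmx (lsubmx C) *m d.

(* HardNet-Aff projection P(f_theta)(x), given the data at the point x. *)
Definition hardnet_aff (k ne m : nat) (A : 'M[R]_(k, ne + m)) (b : 'cV[R]_k)
  (C : 'M[R]_(ne, ne + m)) (d : 'cV[R]_ne) (y : 'cV[R]_m) : 'cV[R]_(ne + m) :=
  let At := Atil A C in
  let ystar := y - pinv At *m relu (At *m y - btil A b C d) in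
  col_mx (invmx (lsubmx C) *m (d - rsubmx C *m ystar)) ystar.

End HardNet.

From HB Require Import structures.
From mathcomp Require Import all_boot all_order all_algebra.
From mathcomp Require Import boolp classical_sets reals.
From mathcomp Require Import ring.
Import Order.TTheory GRing.Theory Num.Theory.
Local Open Scope ring_scope.
Local Open Scope classical_set_scope.

(* Eliminating the equality constraints writes f = [f1; f2] with
   f1 = C1^-1 (d - C2 f2), so the residual f - P(f_theta) is [-M w; w] with
   M = C1^-1 C2 and w = f2 - f*; its norm is at most sqrt(1 + |M|^2) |w|.
   Moreover w = (f2 - f_theta) + Atilde^+ ReLU(Atilde f_theta - btilde), and since
   f2 is feasible for the reduced constraints Atilde f2 <= btilde, each entry of
   the ReLU term is dominated in absolute value by the corresponding entry of
   Atilde (f_theta - f2); this gives |w| <= (1 + |Atilde^+| |Atilde|) |f2 - f_theta|. *)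

Section EuclideanNorm.
Context {R : realType}.

Lemma sum_sqr_ge0 {n} (u : 'I_n -> R) : 0 <= \sum_i u i ^+ 2.
Proof. by apply: sumr_ge0 => i _; apply: sqr_ge0. Qed.

Lemma sum_sqr_eq0 {n} (u : 'I_n -> R) : \sum_i u i ^+ 2 = 0 -> forall i, u i = 0.
Proof.
move=> /eqP; rewrite psumr_eq0; last by move=> i _; apply: sqr_ge0.
by move=> /allP u0 i; apply/eqP; rewrite -sqrf_eq0; exact: u0 (mem_index_enum _).
Qed.

Lemma CauchySchwarz_sum {n} (u v : 'I_n -> R) :
  \sum_i u i * v i <= Num.sqrt (\sum_i u i ^+ 2) * Num.sqrt (\sum_i v i ^+ 2).
Proof.
set a := Num.sqrt _; set b := Num.sqrt _; set S := \sum_i _.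
have a2 : a ^+ 2 = \sum_i u i ^+ 2 by rewrite sqr_sqrtr // sum_sqr_ge0.
have b2 : b ^+ 2 = \sum_i v i ^+ 2 by rewrite sqr_sqrtr // sum_sqr_ge0.
have [a0 | a_neq0] := eqVneq a 0.
  have /sum_sqr_eq0 u0 : \sum_i u i ^+ 2 = 0 by rewrite -a2 a0 expr0n.
  by rewrite /S big1 ?a0 ?mul0r // => i _; rewrite u0 mul0r.
have [b0 | b_neq0] := eqVneq b 0.
  have /sum_sqr_eq0 v0 : \sum_i v i ^+ 2 = 0 by rewrite -b2 b0 expr0n.
  by rewrite /S big1 ?b0 ?mulr0 // => i _; rewrite v0 mulr0.
have ab_gt0 : 0 < a * b by rewrite mulr_gt0 // lt_def ?a_neq0 ?b_neq0 sqrtr_ge0.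
have : 0 <= \sum_i (b * u i - a * v i) ^+ 2 by apply: sum_sqr_ge0.
rewrite (eq_bigr (fun i => b ^+ 2 * u i ^+ 2 - (2 * a * b) * (u i * v i)
                           + a ^+ 2 * v i ^+ 2)); last by move=> i _; ring.
rewrite big_split /= sumrB -!mulr_sumr -a2 -b2 -/S => h.
have : 0 <= (a * b) * (a * b - S) *+ 2 by move: h; congr (_ <= _); ring.
by rewrite pmulrn_lge0 // pmulr_rge0 // subr_ge0.
Qed.

Lemma norm2_ge0 {n} (v : 'cV[R]_n) : 0 <= norm2 v.
Proof. exact: sqrtr_ge0. Qed.

Lemma sqr_norm2 {n} (v : 'cV[R]_n) : norm2 v ^+ 2 = \sum_i v i 0 ^+ 2.
Proof. by rewrite sqr_sqrtr // sum_sqr_ge0. Qed.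

Lemma norm2_eq0 {n} (v : 'cV[R]_n) : norm2 v = 0 -> v = 0.
Proof.
move=> v0; have /sum_sqr_eq0 vi0 : \sum_i v i 0 ^+ 2 = 0 by rewrite -sqr_norm2 v0 expr0n.
by apply/matrixP => i j; rewrite (ord1 j) vi0 mxE.
Qed.

Lemma norm20 {n} : norm2 (0 : 'cV[R]_n) = 0.
Proof. by rewrite /norm2 big1 ?sqrtr0 // => i _; rewrite mxE expr0n. Qed.

Lemma norm2Z {n} (c : R) (v : 'cV[R]_n) : norm2 (c *: v) = `|c| * norm2 v.
Proof.
rewrite /norm2 (eq_bigr (fun i => c ^+ 2 * v i 0 ^+ 2)); last first.
  by move=> i _; rewrite mxE exprMn.
by rewrite -mulr_sumr sqrtrM ?sqr_ge0 // sqrtr_sqr.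
Qed.

Lemma norm2N {n} (v : 'cV[R]_n) : norm2 (- v) = norm2 v.
Proof. by rewrite -scaleN1r norm2Z normrN1 mul1r. Qed.

Lemma norm2_le {n} (v w : 'cV[R]_n) :
  (forall i, v i 0 ^+ 2 <= w i 0 ^+ 2) -> norm2 v <= norm2 w.
Proof. by move=> vw; apply: ler_wsqrtr; apply: ler_sum => i _. Qed.

Lemma ler_norm_norm2 {n} (v : 'cV[R]_n) i : `|v i 0| <= norm2 v.
Proof.
rewrite -sqrtr_sqr; apply: ler_wsqrtr.
by rewrite (bigD1 i) //= lerDl; apply: sumr_ge0 => j _; apply: sqr_ge0.
Qed.

Lemma norm2D {n} (u v : 'cV[R]_n) : norm2 (u + v) <= norm2 u + norm2 v.
Proof.
have cs := CauchySchwarz_sum (fun i => u i 0) (fun i => v i 0).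
rewrite -/(norm2 u) -/(norm2 v) in cs.
have sqrD : norm2 (u + v) ^+ 2
    = norm2 u ^+ 2 + 2 * \sum_i u i 0 * v i 0 + norm2 v ^+ 2.
  rewrite !sqr_norm2 mulr_sumr -!big_split; apply: eq_bigr => i _ /=.
  by rewrite mxE; ring.
rewrite -ler_sqr ?nnegrE ?addr_ge0 ?norm2_ge0 // sqrD sqrrD lerD2r lerD2l.
by rewrite -[X in _ <= X]mulr_natl ler_pM2l.
Qed.

Lemma sqr_norm2_col {n1 n2} (u : 'cV[R]_n1) (v : 'cV[R]_n2) :
  norm2 (col_mx u v) ^+ 2 = norm2 u ^+ 2 + norm2 v ^+ 2.
Proof.
rewrite !sqr_norm2 big_split_ord /=.
by congr (_ + _); apply: eq_bigr => i _; rewrite ?col_mxEu ?col_mxEd.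
Qed.

Lemma norm2_col_le {n1 n2} (u : 'cV[R]_n1) (v : 'cV[R]_n2) (c : R) :
  norm2 u <= c * norm2 v -> norm2 (col_mx u v) <= Num.sqrt (1 + c ^+ 2) * norm2 v.
Proof.
move=> uv; rewrite -ler_sqr ?nnegrE ?mulr_ge0 ?sqrtr_ge0 ?norm2_ge0 //.
rewrite sqr_norm2_col exprMn (@sqr_sqrtr _ (1 + c ^+ 2)) ?addr_ge0 ?sqr_ge0 //.
rewrite mulrDl mul1r addrC lerD2l -exprMn lerXn2r ?nnegrE ?norm2_ge0 //.
exact: le_trans (norm2_ge0 u) uv.
Qed.

End EuclideanNorm.

Section OperatorNorm.
Context {R : realType} {p q : nat} (M : 'M[R]_(p, q)).

Lemma opnorm2_has_sup :
  has_sup [set norm2 (M *m v) | v in [set v : 'cV[R]_q | norm2 v <= 1]].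
Proof.
split; first by exists (norm2 (M *m 0)), 0; rewrite //= norm20.
exists (Num.sqrt (\sum_i (\sum_j `|M i j|) ^+ 2)) => _ [v /= v_le1 <-].
apply: ler_wsqrtr; apply: ler_sum => i _.
have Mv_le : `|(M *m v) i 0| <= \sum_j `|M i j|.
  rewrite mxE; apply: le_trans (ler_norm_sum _ _ _) _; apply: ler_sum => j _.
  rewrite normrM ler_piMr //; exact: le_trans (ler_norm_norm2 v j) v_le1.
by rewrite -[X in X <= _]real_normK ?num_real // lerXn2r ?nnegrE ?sumr_ge0.
Qed.

Lemma opnorm2_ge0 : 0 <= opnorm2 M.
Proof.
apply: le_trans (norm2_ge0 (M *m 0)) _.
by apply: sup_upper_bound; [exact: opnorm2_has_sup | exists 0; rewrite //= norm20].
Qed.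

Lemma norm2_mulmx_le v : norm2 (M *m v) <= opnorm2 M * norm2 v.
Proof.
have [v0 | v_neq0] := eqVneq (norm2 v) 0.
  by rewrite v0 mulr0 (norm2_eq0 _ v0) mulmx0 norm20.
have v_gt0 : 0 < norm2 v by rewrite lt_def v_neq0 norm2_ge0.
have unit_v : norm2 ((norm2 v)^-1 *: v) <= 1.
  by rewrite norm2Z ger0_norm ?invr_ge0 ?norm2_ge0 // mulVf.
have : norm2 (M *m ((norm2 v)^-1 *: v)) <= opnorm2 M.
  by apply: sup_upper_bound; [exact: opnorm2_has_sup | exists ((norm2 v)^-1 *: v)].
by rewrite -scalemxAr norm2Z ger0_norm ?invr_ge0 ?norm2_ge0 // ler_pdivrMl // mulrC.
Qed.

End OperatorNorm.

Section HardNetBounds.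
Context {R : realType}.

Lemma norm2_relu_le {k} (u g : 'cV[R]_k) : mxle 0 g -> norm2 (relu u) <= norm2 (u + g).
Proof.
move=> g_ge0; apply: norm2_le => i; rewrite !mxE.
have := g_ge0 i 0; rewrite mxE; set t := u i 0; set s := g i 0 => s_ge0.
have [_ | t_gt0] := leP t 0.
  by rewrite expr0n sqr_ge0.
have t_ge0 := ltW t_gt0; by rewrite lerXn2r ?nnegrE ?lerDl ?addr_ge0.
Qed.

Lemma norm2_add_mulmx_le {p q} (P : 'M[R]_(q, p)) (N : 'M[R]_(p, q)) e r :
  norm2 r <= norm2 (N *m e) ->
  norm2 (e + P *m r) <= (1 + opnorm2 P * opnorm2 N) * norm2 e.
Proof.
move=> r_le; apply: le_trans (norm2D _ _) _; rewrite mulrDl mul1r lerD2l -mulrA.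
apply: le_trans (norm2_mulmx_le _ _) _; apply: ler_wpM2l; first exact: opnorm2_ge0.
exact: le_trans r_le (norm2_mulmx_le _ _).
Qed.

End HardNetBounds.

Section HardNetAff.
Context {R : realType} {k ne m : nat}.
Variables (A : 'M[R]_(k, ne + m)) (b : 'cV[R]_k) (C : 'M[R]_(ne, ne + m)) (d : 'cV[R]_ne).

Definition hardnet_ystar (y : 'cV[R]_m) : 'cV[R]_m :=
  y - pinv (Atil A C) *m relu (Atil A C *m y - btil A b C d).

Lemma hardnet_affE y :
  hardnet_aff A b C d y =
  col_mx (invmx (lsubmx C) *m (d - rsubmx C *m hardnet_ystar y)) (hardnet_ystar y).
Proof. by []. Qed.

Variable f : 'cV[R]_(ne + m).
Hypotheses (C1_unit : lsubmx C \in unitmx) (fC : C *m f = d).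

Lemma mul_constraint_split {p} (M : 'M[R]_(p, ne + m)) :
  M *m f = lsubmx M *m usubmx f + rsubmx M *m dsubmx f.
Proof. by rewrite -{1}[f]vsubmxK -{1}[M]hsubmxK mul_row_col. Qed.

Lemma usubmx_from_eq_constraints :
  usubmx f = invmx (lsubmx C) *m (d - rsubmx C *m dsubmx f).
Proof.
apply: (canRL (mulKmx C1_unit)).
by rewrite -fC (mul_constraint_split C) addrK.
Qed.

Lemma btil_sub_Atil : btil A b C d - Atil A C *m dsubmx f = b - A *m f.
Proof.
rewrite /btil /Atil (mul_constraint_split A) usubmx_from_eq_constraints.
rewrite mulmxBl !mulmxBr !mulmxA.
move: b (lsubmx A *m _ *m d) (rsubmx A *m _) (lsubmx A *m _ *m _ *m _) => u v w z.
by rewrite opprB !opprD opprK !addrA.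
Qed.

Lemma hardnet_aff_residual y :
  f - hardnet_aff A b C d y =
  col_mx (invmx (lsubmx C) *m rsubmx C *m (hardnet_ystar y - dsubmx f))
         (dsubmx f - hardnet_ystar y).
Proof.
rewrite hardnet_affE -{1}[f]vsubmxK opp_col_mx add_col_mx usubmx_from_eq_constraints.
rewrite -[in RHS]mulmxA -mulmxBr [in RHS]mulmxBr.
by congr (col_mx (_ *m _) _); rewrite opprB addrC addrA addrNK.
Qed.

Lemma hardnet_ystar_error y : mxle (A *m f) b ->
  norm2 (dsubmx f - hardnet_ystar y)
  <= (1 + opnorm2 (pinv (Atil A C)) * opnorm2 (Atil A C)) * norm2 (dsubmx f - y).
Proof.
move=> fA; rewrite /hardnet_ystar opprB addrA addrAC.
apply: norm2_add_mulmx_le.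
have slack_ge0 : mxle 0 (b - A *m f).
  by move=> i j; have := fA i j; rewrite !mxE subr_ge0.
have -> : Atil A C *m (dsubmx f - y)
          = - ((Atil A C *m y - btil A b C d) + (b - A *m f)).
  by rewrite -btil_sub_Atil addrA addrNK mulmxBr opprB.
by rewrite norm2N norm2_relu_le.
Qed.

End HardNetAff.

Theorem mainTheorem2 (R : realType) (n_in n_ineq n_eq m : nat)
  (X : set 'cV[R]_n_in)
  (A : 'cV[R]_n_in -> 'M[R]_(n_ineq, n_eq + m)) (b : 'cV[R]_n_in -> 'cV[R]_n_ineq)
  (C : 'cV[R]_n_in -> 'M[R]_(n_eq, n_eq + m)) (d : 'cV[R]_n_in -> 'cV[R]_n_eq)
  (feas : forall x, X x -> exists y : 'cV[R]_(n_eq + m),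
      mxle (A x *m y) (b x) /\ C x *m y = d x)
  (C1inv : forall x, X x -> lsubmx (C x) \in unitmx)
  (Afull : forall x, X x -> row_free (Atil (A x) (C x)))
  (f : 'cV[R]_n_in -> 'cV[R]_(n_eq + m))
  (fA : forall x, X x -> mxle (A x *m f x) (b x))
  (fC : forall x, X x -> C x *m f x = d x)
  (f_theta : 'cV[R]_n_in -> 'cV[R]_m) (x : 'cV[R]_n_in) (hx : X x) :
  norm2 (f x - hardnet_aff (A x) (b x) (C x) (d x) (f_theta x))
  <= (1 + opnorm2 (pinv (Atil (A x) (C x))) * opnorm2 (Atil (A x) (C x)))
     * Num.sqrt (1 + opnorm2 (invmx (lsubmx (C x)) *m rsubmx (C x)) ^+ 2)
     * norm2 (dsubmx (f x) - f_theta x).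
Proof.
have C1_unit := C1inv x hx.
rewrite (hardnet_aff_residual _ _ _ _ _ C1_unit (fC x hx)).
apply: le_trans (norm2_col_le _ _ (opnorm2 (invmx (lsubmx (C x)) *m rsubmx (C x))) _) _.
  by rewrite -opprB mulmxN norm2N norm2_mulmx_le.
rewrite [(1 + _) * _]mulrC -mulrA; apply: ler_wpM2l; first exact: sqrtr_ge0.
exact: hardnet_ystar_error _ _ _ _ _ C1_unit (fC x hx) _ (fA x hx).
Qed.
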